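(* If $M$ is a matroid of rank $r\geq 2$, then $M$ is simple if and only if $M$ is $(r-1,1)$-uniform.
   Context: For positive integers $k,\ell$, a matroid is $(k,\ell)$-uniform if it has no minor isomorphic to $U_{k,k}\oplus U_{0,\ell}$. *)

From mathcomp Require Import all_boot.
Set Implicit Arguments. Unset Strict Implicit. Unset Printing Implicit Defensive.

Section Matroids.
Variable T : finType.

Definition is_matroid (E : {set T}) (I : pred {set T}) : Prop :=
  [/\ I set0,
      (forall X : {set T}, I X -> X \subset E),
      (forall X Y : {set T}, Y \subset X -> I X -> I Y)
    & (forall X Y : {set T}, I X -> I Y -> #|X| < #|Y| ->
         exists2 y, y \in Y :\: X & I (y |: X))].

Definition rk (I : pred {set T}) (X : {set T}) : nat :=
  \max_(Y : {set T} | (Y \subset X) && I Y) #|Y|.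

Definition mrank (E : {set T}) (I : pred {set T}) : nat := rk I E.

Definition circuit (E : {set T}) (I : pred {set T}) (C : {set T}) : Prop :=
  [/\ C \subset E, ~~ I C & forall x, x \in C -> I (C :\ x)].

(* simple: no loops (circuits of size 1) and no parallel pairs (circuits of size 2) *)
Definition simple (E : {set T}) (I : pred {set T}) : Prop :=
  forall C : {set T}, circuit E I C -> 2 < #|C|.

(* minor M / C \ D : ground set E \ (C u D), X independent iff r(X u C) = |X| + r(C) *)
Definition minor_ground (E C D : {set T}) : {set T} := E :\: (C :|: D).
Definition minor_indep (E : {set T}) (I : pred {set T}) (C D : {set T}) : pred {set T} :=
  fun X => (X \subset minor_ground E C D) && (rk I (X :|: C) == #|X| + rk I C).

End Matroids.

Definition matroid_iso (T T' : finType) (E : {set T}) (I : pred {set T})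
    (E' : {set T'}) (I' : pred {set T'}) : Prop :=
  exists f : T -> T',
    [/\ {in E &, injective f}, f @: E = E'
      & forall X : {set T}, X \subset E -> I X = I' (f @: X)].

Definition unif_indep (r n : nat) : pred {set 'I_n} := fun X => #|X| <= r.

Definition dsum_ground (T1 T2 : finType) (E1 : {set T1}) (E2 : {set T2})
  : {set (T1 + T2)%type} := (@inl T1 T2 @: E1) :|: (@inr T1 T2 @: E2).
Definition dsum_indep (T1 T2 : finType) (E1 : {set T1}) (I1 : pred {set T1})
    (E2 : {set T2}) (I2 : pred {set T2}) : pred {set (T1 + T2)%type} :=
  fun X => [&& X \subset dsum_ground E1 E2,
              I1 [set x | @inl T1 T2 x \in X] & I2 [set y | @inr T1 T2 y \in X]].

Definition has_minor_iso (T T' : finType) (E : {set T}) (I : pred {set T})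
    (E' : {set T'}) (I' : pred {set T'}) : Prop :=
  exists C D : {set T},
    [/\ C \subset E, D \subset E, [disjoint C & D]
      & matroid_iso (minor_ground E C D) (minor_indep E I C D) E' I'].

Definition kl_uniform (k l : nat) (T : finType) (E : {set T}) (I : pred {set T}) : Prop :=
  ~ has_minor_iso E I
      (dsum_ground [set: 'I_k] [set: 'I_l])
      (dsum_indep [set: 'I_k] (@unif_indep k k) [set: 'I_l] (@unif_indep 0 l)).

From mathcomp Require Import all_boot zify.
Set Implicit Arguments. Unset Strict Implicit. Unset Printing Implicit Defensive.

(* U_{k,k} (+) U_{0,1} is a free matroid on k elements plus a loop.  If M / C \ D
   is such a minor with k = r - 1, the r - 1 free elements force r(C) <= 1; in a
   simple matroid C is then independent with at most one element, so e + C is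
   independent, having at most two elements, and the loop e of the minor is not
   a loop of M / C.  Conversely, a circuit Z with |Z| <= 2 yields e in Z and a basis A
   containing Z - e, so that Z is inside {c, e} for some c in A; contracting c
   and deleting everything outside A + e leaves A - c free and makes e a loop. *)

Section Rank.
Variables (T : finType) (I : pred {set T}).

Lemma card_le_rk (X Y : {set T}) : Y \subset X -> I Y -> #|Y| <= rk I X.
Proof. by move=> sYX indY; apply: leq_bigmax_cond; rewrite sYX indY. Qed.

Lemma rk_le_card (X : {set T}) : rk I X <= #|X|.
Proof. by apply/bigmax_leqP => Y /andP[sYX _]; apply: subset_leq_card. Qed.

Lemma rkS (X Y : {set T}) : X \subset Y -> rk I X <= rk I Y.
Proof.
move=> sXY; apply/bigmax_leqP => Z /andP[sZX indZ].
exact: card_le_rk (subset_trans sZX sXY) indZ.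
Qed.

Lemma rk_indep (X : {set T}) : I X -> rk I X = #|X|.
Proof. by move=> indX; apply/eqP; rewrite eqn_leq rk_le_card card_le_rk. Qed.

Hypothesis I_set0 : I set0.

Lemma rk_witness (X : {set T}) :
  exists Y : {set T}, [/\ Y \subset X, I Y & #|Y| = rk I X].
Proof.
rewrite /rk (bigmax_eq_arg set0) ?sub0set ?I_set0 //.
case: arg_maxnP => [|Y /andP[sYX indY] _]; first by rewrite sub0set I_set0.
by exists Y.
Qed.

Lemma rk_eq_card (X : {set T}) : (rk I X == #|X|) = I X.
Proof.
apply/idP/idP => [/eqP rkX | /rk_indep ->]; last exact: eqxx.
have [Y [sYX indY cardY]] := rk_witness X.
suff -> : X = Y by [].
by apply/eqP; rewrite eq_sym eqEcard sYX cardY rkX leqnn.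
Qed.

Lemma rk_setU_indep (X C : {set T}) : I C -> [disjoint X & C] ->
  (rk I (X :|: C) == #|X| + rk I C) = I (X :|: C).
Proof.
move=> indC disXC; rewrite -rk_eq_card (rk_indep indC).
by have [_] := leq_card_setU X C; rewrite disXC => /eqP ->.
Qed.

End Rank.

Lemma dsum_groundT (T1 T2 : finType) :
  dsum_ground [set: T1] [set: T2] = [set: (T1 + T2)%type].
Proof.
apply/setP => z; rewrite !inE.
by case: z => x; apply/orP; [left | right]; apply: imset_f; rewrite inE.
Qed.

Definition free_loop_indep (k : nat) : pred {set ('I_k + 'I_1)%type} :=
  dsum_indep [set: 'I_k] (@unif_indep k k) [set: 'I_1] (@unif_indep 0 1).
Arguments free_loop_indep : clear implicits.

Lemma free_loop_indepE (k : nat) (X : {set ('I_k + 'I_1)%type}) :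
  free_loop_indep k X = (inr ord0 \notin X).
Proof.
rewrite /free_loop_indep /dsum_indep dsum_groundT subsetT /unif_indep /=.
have -> : #|[set x | inl x \in X]| <= k.
  by apply: leq_trans (max_card _) _; rewrite card_ord.
rewrite /= leqn0 cards_eq0.
apply/eqP/idP => [X0 | X'0]; first by move/setP/(_ ord0): X0; rewrite !inE => ->.
by apply/setP => y; rewrite (ord1 y) !inE (negbTE X'0).
Qed.

Section FreeLoopIso.
Variables (T : finType) (G : {set T}) (J : pred {set T}) (k : nat).

Lemma matroid_iso_free_loop :
  matroid_iso G J [set: 'I_k + 'I_1] (free_loop_indep k) ->
  exists2 e, e \in G & [/\ #|G| = k.+1, ~~ J [set e] & J (G :\ e)].
Proof.
case=> f [injf imf indf].
have : inr ord0 \in f @: G by rewrite imf inE.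
case/imsetP => e eG fe; exists e => //; split.
- by rewrite -(card_in_imset injf) imf cardsT card_sum !card_ord addn1.
- by rewrite indf ?sub1set // imset_set1 free_loop_indepE in_set1 fe eqxx.
rewrite indf ?subsetDl // free_loop_indepE fe.
apply/imsetP => -[x /setD1P[xe xG] fxe]; case/eqP: xe.
exact: injf.
Qed.

Variables (S : {set T}) (e : T).
Hypotheses (eS : e \notin S) (cardS : #|S| = k).

(* Elements of S are numbered by their position in enum S; all other points,
   in particular e, are sent to the loop. *)
Definition free_loop_code (x : T) : 'I_k + 'I_1 :=
  if insub (index x (enum S)) is Some i then inl i else inr ord0.

Lemma index_enum_lt (x : T) : (index x (enum S) < k) = (x \in S).
Proof. by rewrite -cardS cardE index_mem mem_enum. Qed.

Lemma free_loop_code_loop (x : T) : (free_loop_code x == inr ord0) = (x \notin S).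
Proof.
rewrite /free_loop_code; case: insubP => [i | ]; rewrite index_enum_lt.
  by move=> ->.
by move/negbTE ->.
Qed.

Lemma free_loop_code_inj : {in S &, injective free_loop_code}.
Proof.
move=> x y xS yS; rewrite /free_loop_code.
rewrite !insubT ?index_enum_lt // => _ _ [].
by move=> eqxy; apply: (index_inj x _ _ eqxy); rewrite mem_enum.
Qed.

Lemma free_loop_code_inj_setU1 : {in e |: S &, injective free_loop_code}.
Proof.
have code_e : free_loop_code e = inr ord0 by apply/eqP; rewrite free_loop_code_loop.
have codeS z : z \in S -> (inr ord0 == free_loop_code z) = false.
  by rewrite eq_sym free_loop_code_loop => ->.
move=> x y /setU1P[-> | xS] /setU1P[-> | yS] //; rewrite ?code_e.
- by move/eqP; rewrite codeS.
- by move/esym/eqP; rewrite codeS.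
- exact: free_loop_code_inj.
Qed.

Lemma free_loop_code_imset_loop (X : {set T}) : X \subset e |: S ->
  (inr ord0 \in free_loop_code @: X) = (e \in X).
Proof.
move=> sXeS; apply/imsetP/idP => [[x xX /eqP] | eX].
  rewrite eq_sym free_loop_code_loop.
  by case/setU1P: (subsetP sXeS x xX) => [<- | -> //].
by exists e => //; apply/esym/eqP; rewrite free_loop_code_loop.
Qed.

Lemma matroid_iso_free_loop_setU1 :
  (forall X : {set T}, X \subset e |: S -> J X = (e \notin X)) ->
  matroid_iso (e |: S) J [set: 'I_k + 'I_1] (free_loop_indep k).
Proof.
move=> indJ; exists free_loop_code; split.
- exact: free_loop_code_inj_setU1.
- apply/eqP; rewrite eqEcard subsetT cardsT card_sum !card_ord.
  by rewrite (card_in_imset free_loop_code_inj_setU1) cardsU1 eS cardS addn1 add1n ltnSn.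
- by move=> X sXeS; rewrite indJ // free_loop_indepE free_loop_code_imset_loop.
Qed.

End FreeLoopIso.

Section Matroid.
Variables (T : finType) (E : {set T}) (I : pred {set T}).
Hypothesis matroidEI : is_matroid E I.

Lemma indep0 : I set0. Proof. by case: matroidEI. Qed.

Lemma indep_sub (X : {set T}) : I X -> X \subset E.
Proof. by case: matroidEI => _ + _ _; apply. Qed.

Lemma indepS (X Y : {set T}) : Y \subset X -> I X -> I Y.
Proof. by case: matroidEI => _ _ + _; apply. Qed.

Lemma dep_has_circuit (X : {set T}) : X \subset E -> ~~ I X ->
  exists2 Z : {set T}, Z \subset X & circuit E I Z.
Proof.
move=> sXE depX.
have [Z /minsetP[depZ minZ] sZX] := minset_exists (P := [pred Z | ~~ I Z]) depX.
exists Z => //; split=> [|//|z zZ]; first exact: subset_trans sZX sXE.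
apply: contraT => depZz; have := minZ _ depZz (subsetDl Z [set z]).
by move/setP/(_ z); rewrite !inE zZ eqxx.
Qed.

Lemma circuit_card_le_rk (Z X : {set T}) : circuit E I Z -> Z \subset X ->
  #|Z|.-1 <= rk I X.
Proof.
move=> [_ depZ minZ] sZX.
have [z zZ] : exists z, z \in Z.
  by apply/set0Pn; apply: contraNneq depZ => ->; exact: indep0.
rewrite (cardsD1 z) zZ; apply: card_le_rk (minZ z zZ).
exact: subset_trans (subsetDl Z _) sZX.
Qed.

Lemma indep_extend (K : {set T}) : I K ->
  exists A : {set T}, [/\ K \subset A, I A & #|A| = mrank E I].
Proof.
move=> indK; pose P (A : {set T}) := (K \subset A) && I A.
have PK : P K by rewrite /P subxx indK.
case: (arg_maxnP (fun A : {set T} => #|A|) PK) => A /andP[sKA indA] maxA.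
exists A; split=> //.
apply/eqP; rewrite /mrank eqn_leq card_le_rk ?indep_sub //=.
have [B [_ indB <-]] := rk_witness indep0 E; rewrite leqNgt; apply/negP => ltAB.
case: matroidEI => _ _ _ /(_ A B indA indB ltAB) [y /setDP[_ yA] indyA].
have := maxA (y |: A); rewrite /P indyA (subset_trans sKA (subsetUr _ _)) /geq.
by rewrite cardsU1 yA /= ltnn => /(_ isT).
Qed.

Section Simple.
Hypothesis simpleEI : simple E I.

Lemma simple_dep_card (X : {set T}) : X \subset E -> ~~ I X -> 2 < #|X|.
Proof.
move=> sXE /(dep_has_circuit sXE) [Z sZX /simpleEI Z3].
exact: leq_trans Z3 (subset_leq_card sZX).
Qed.

Lemma simple_dep_rk (X : {set T}) : X \subset E -> ~~ I X -> 1 < rk I X.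
Proof.
move=> sXE /(dep_has_circuit sXE) [Z sZX circZ].
have := simpleEI circZ; have := circuit_card_le_rk circZ sZX; lia.
Qed.

Lemma simple_indep_setU1 (C : {set T}) (e : T) :
  C \subset E -> rk I C <= 1 -> e \in E -> I (e |: C).
Proof.
move=> sCE rkC eE; have indC : I C.
  by apply: contraT => /(simple_dep_rk sCE); rewrite ltnNge rkC.
apply: contraT => /simple_dep_card; rewrite subUset sub1set eE sCE => /(_ isT).
rewrite (rk_indep indC) in rkC; rewrite cardsU1; case: (e \notin C) => /=; lia.
Qed.

End Simple.

Lemma simple_kl_uniform : 2 <= mrank E I -> simple E I ->
  kl_uniform (mrank E I).-1 1 E I.
Proof.
move=> rank_ge2 simpleEI [C [D [sCE _ _]]]; rewrite dsum_groundT.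
set G := minor_ground E C D => /matroid_iso_free_loop [e eG [cardG loop_e indep_Ge]].
have sGE : G \subset E := subsetDl _ _.
have /andP[eC eE] : (e \notin C) && (e \in E).
  by move: (eG); rewrite !inE negb_or => /andP[/andP[-> _] ->].
have cardGe : #|G :\ e| = (mrank E I).-1.
  by move: cardG; rewrite (cardsD1 e) eG add1n => -[].
have rkC : rk I C <= 1.
  move: indep_Ge => /andP[_ /eqP rkGeC].
  have : rk I ((G :\ e) :|: C) <= mrank E I.
    by apply: rkS; rewrite subUset sCE (subset_trans (subsetDl _ _) sGE).
  by rewrite rkGeC cardGe; lia.
have indeC := simple_indep_setU1 simpleEI sCE rkC eE.
have indC : I C := indepS (subsetUr _ _) indeC.
case/negP: loop_e; rewrite /minor_indep sub1set eG /=.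
by rewrite rk_setU_indep ?disjoints1 // indep0.
Qed.

Lemma small_circuit_basis (Z : {set T}) :
  0 < mrank E I -> circuit E I Z -> #|Z| <= 2 ->
  exists e c A, [/\ I A, #|A| = mrank E I, c \in A, e \in E :\: A & ~~ I [set c; e]].
Proof.
move=> rank_gt0 [sZE depZ minZ] cardZ.
have [e eZ] : exists e, e \in Z.
  by apply/set0Pn; apply: contraNneq depZ => ->; exact: indep0.
have [A [sZeA indA cardA]] := indep_extend (minZ e eZ).
have [c cA sZec] : exists2 c, c \in A & Z :\ e \subset [set c].
  have [Ze0 | [c cZe]] := set_0Vmem (Z :\ e).
    have [c cA] : exists c, c \in A by apply/set0Pn; rewrite -card_gt0 cardA.
    by exists c; rewrite // Ze0 sub0set.
  exists c; first exact: subsetP sZeA c cZe.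
  have /card_le1_eqP eqZe : #|Z :\ e| <= 1 by move: cardZ; rewrite (cardsD1 e) eZ.
  by apply/subsetP => x xZe; rewrite inE (eqZe x c).
have sZce : Z \subset [set c; e].
  apply/subsetP => x xZ; rewrite !inE.
  case: (x =P e) => [_ | /eqP xe]; first by rewrite orbT.
  by rewrite orbF -in_set1; apply: (subsetP sZec); rewrite !inE xe.
exists e, c, A; split=> //.
  rewrite !inE (subsetP sZE) // andbT; apply: contra depZ => eA.
  by apply: indepS indA; rewrite -(setD1K eZ) subUset sub1set eA.
by apply: contra depZ; apply: indepS sZce.
Qed.

Lemma has_minor_free_loop (A : {set T}) (c e : T) :
  I A -> c \in A -> e \in E :\: A -> ~~ I [set c; e] ->
  has_minor_iso E I [set: 'I_#|A|.-1 + 'I_1] (free_loop_indep #|A|.-1).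
Proof.
move=> indA cA /setDP[eE eA] dep_ce.
have sAE := indep_sub indA.
have ce : c != e by apply: contraNneq eA => <-.
have groundE : minor_ground E [set c] (E :\: (e |: A)) = e |: (A :\ c).
  apply/setP => x; rewrite !inE; case: (x =P e) => [-> | _] /=.
    by rewrite eq_sym (negbTE ce) eE.
  case: (x =P c) => [// | _] /=.
  by case xA: (x \in A) => /=; [exact: subsetP sAE x xA | exact: andNb].
exists [set c], (E :\: (e |: A)); split.
- by rewrite sub1set (subsetP sAE).
- exact: subsetDl.
- by rewrite disjoints1 !inE cA orbT.
rewrite groundE; apply: matroid_iso_free_loop_setU1.
- by rewrite !inE (negbTE eA) andbF.
- by rewrite (cardsD1 c A) cA add1n.
move=> X sXeA.
have cX : c \notin X.
  by apply: contraNN ce => cX; move: (subsetP sXeA c cX); rewrite !inE eqxx orbF.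
have indc : I [set c] by apply: indepS indA; rewrite sub1set.
rewrite /minor_indep groundE sXeA /= rk_setU_indep ?indep0 //; last first.
  by rewrite disjoint_sym disjoints1.
case eX: (e \in X) => /=.
  apply: negbTE; apply: contra dep_ce => /indepS; apply.
  by rewrite subUset !sub1set !inE eqxx eX orbT.
apply: indepS indA; rewrite subUset sub1set cA andbT; apply/subsetP => x xX.
have := subsetP sXeA x xX; rewrite !inE => /orP[/eqP xe | /andP[]//].
by rewrite -xe xX in eX.
Qed.

Lemma kl_uniform_simple : 2 <= mrank E I -> kl_uniform (mrank E I).-1 1 E I ->
  simple E I.
Proof.
move=> rank_ge2 unifEI Z circZ; rewrite ltnNge; apply/negP => cardZ; apply: unifEI.
have [e [c [A [indA cardA cA eEA dep_ce]]]] :=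
  small_circuit_basis (ltnW rank_ge2) circZ cardZ.
by rewrite dsum_groundT -cardA; apply: has_minor_free_loop dep_ce.
Qed.

End Matroid.

Theorem lemma2p2 (T : finType) (E : {set T}) (I : pred {set T}) :
  is_matroid E I -> 2 <= mrank E I ->
  (simple E I <-> kl_uniform (mrank E I).-1 1 E I).
Proof.
move=> matroidEI rank_ge2; split.
- exact: simple_kl_uniform.
- exact: kl_uniform_simple.
Qed.
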